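(* For every $n\ge0$, $$B^n=\sum_{m=0}^{\lfloor n/2\rfloor}[n-2m]!\Big(\sum_{\alpha\in\mathcal P_t(m\times(n-2m))}[\alpha_1+1]^2\cdots[\alpha_m+1]^2\Big)P_{n-2m}.$$
   Context: Fix $t\in\{0,1\}$. Let $\mathbf U^\imath_t=\mathbb Q(q)[B]$ be the polynomial algebra in $B$ over $\mathbb Q(q)$, $[n]=(q^n-q^{-n})/(q-q^{-1})$, $[n]!=[1]\cdots[n]$. The $\imath$-canonical basis is $P_n=\frac{B^{\sigma_t(n)}}{[n]!}\prod_{0\le k\le n-1,\ k\equiv t\ (2)}(B^2-[k]^2)$, where $\sigma_t(n)=0$ for $n$ even, $-1$ for $n$ odd and $t=0$, $1$ for $n$ odd and $t=1$ (when $\sigma_t(n)=-1$ the product contains the factor $B^2$, so $P_n$ is a polynomial). For $m,k\ge0$, $\mathcal P_t(m\times k)$ is the set of $\alpha\in\mathbb N^m$ with $0\le\alpha_1\le\cdots\le\alpha_m\le k$ and $\alpha_i\not\equiv t\pmod2$ for each $i$. *)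

From HB Require Import structures.
From mathcomp Require Import all_boot all_order all_algebra.
From mathcomp Require Import fraction.
Set Implicit Arguments. Unset Strict Implicit. Unset Printing Implicit Defensive.
Import Order.TTheory GRing.Theory Num.Theory.
Local Open Scope ring_scope.

Definition Qq : fieldType := {fraction {poly rat}}.

Definition qq : Qq := tofrac ('X : {poly rat}).

Definition qint (n : nat) : Qq := (qq ^+ n - qq ^- n) / (qq - qq^-1).

Definition qfact (n : nat) : Qq := \prod_(1 <= i < n.+1) qint i.

(* U^imath_t = Q(q)[B] is modelled as {poly Qq}, with B = 'X. *)
Notation UI := {poly Qq}.

Definition iprod (t n : nat) : UI :=
  \prod_(0 <= k < n | (k %% 2 == t)%N) ('X ^+ 2 - ((qint k) ^+ 2)%:P).

(* The imath-canonical basis element P_n: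
   - n even:            P_n = (1/[n]!) * prod
   - n odd and t = 0:   P_n = (1/[n]!) * B^{-1} * prod  (prod contains B^2,
                        so B^{-1} * prod is computed as exact division by B)
   - n odd and t = 1:   P_n = (1/[n]!) * B * prod *)
Definition Pcan (t n : nat) : UI :=
  (qfact n)^-1 *:
    (if ~~ odd n then iprod t n
     else if t == 0%N then iprod t n %/ 'X
     else 'X * iprod t n).

(* Sum over alpha in P_t(m x k) of [alpha_1+1]^2 ... [alpha_m+1]^2, where
   P_t(m x k) = { alpha in N^m : 0 <= alpha_1 <= ... <= alpha_m <= k,
                  alpha_i not = t mod 2 }.
   alpha is represented as an m-tuple of elements of 'I_(k.+1), i.e. entries <= k. *)
Definition partsum (t m k : nat) : Qq :=
  \sum_(a : m.-tuple 'I_k.+1 |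
          sorted leq (map (@nat_of_ord _) a) &&
          all (fun x : 'I_k.+1 => ((x : nat) %% 2 != t)%N) a)
     \prod_(x <- a) (qint (x : nat).+1) ^+ 2.

(* Q_n := [n]! P_n satisfies the three-term recurrence
   B Q_(n+1) = Q_(n+2) + w_n Q_n, where w_n = [n+1]^2 if n <> t (mod 2) and
   w_n = 0 otherwise.  Expanding B^n along it, the coefficient of Q_k vanishes
   unless n = k + 2m and obeys a Pascal-type recursion in (n, k).  Because
   w_n w_(n+1) = 0, the complete homogeneous sums h_m(w_0, ..., w_k) obey the
   same recursion, hence are these coefficients; and h_m(w_0, ..., w_k) is
   exactly the sum over P_t(m x k). *)
From HB Require Import structures.
From mathcomp Require Import all_boot all_order all_algebra.
From mathcomp Require Import fraction ring zify.
Set Implicit Arguments. Unset Strict Implicit. Unset Printing Implicit Defensive.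
Import Order.TTheory GRing.Theory Num.Theory.
Local Open Scope ring_scope.

Fixpoint sorted_seqs (m k : nat) : seq (seq nat) :=
  if m is m'.+1 then [seq rcons s j | j <- iota 0 k.+1, s <- sorted_seqs m' j]
  else [:: [::]].

Lemma sorted_seqsS m k :
  sorted_seqs m.+1 k = [seq rcons s j | j <- iota 0 k.+1, s <- sorted_seqs m j].
Proof. by []. Qed.

Lemma sorted_rcons_leq (s : seq nat) x :
  sorted leq (rcons s x) = sorted leq s && all (leq^~ x) s.
Proof.
rewrite -rev_sorted rev_rcons /= (path_sortedE (fun a b c hab hbc => leq_trans hbc hab)).
by rewrite all_rev rev_sorted andbC.
Qed.

Lemma mem_sorted_seqs m k s :
  (s \in sorted_seqs m k) = [&& size s == m, sorted leq s & all (leq^~ k) s].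
Proof.
elim: m k s => [|m IHm] k; first by case.
rewrite sorted_seqsS; case/lastP => [|s x].
  by apply/allpairsPdep => -[j [s' [_ _ /(congr1 size)]]]; rewrite size_rcons.
rewrite size_rcons eqSS sorted_rcons_leq all_rcons.
apply/allpairsPdep/and3P => [[j [s' [jk s'j /rcons_inj [-> ->]]]]|].
  rewrite mem_iota leq0n add0n ltnS /= in jk.
  move: s'j; rewrite IHm => /and3P [-> -> sj] /=.
  rewrite jk sj; split=> //; apply: sub_all sj => y yj; exact: leq_trans yj jk.
move=> [sm /andP [ss sx] /andP [xk _]]; exists x, s; split=> //.
- by rewrite mem_iota leq0n add0n ltnS xk.
- by rewrite IHm sm ss sx.
Qed.

Lemma uniq_sorted_seqs m k : uniq (sorted_seqs m k).
Proof.
elim: m k => [|m IHm] k //; rewrite sorted_seqsS.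
apply: allpairs_uniq_dep => [||[j s] [j' s'] _ _ /=].
- exact: iota_uniq.
- by move=> j _; apply: IHm.
by case/rcons_inj => -> ->.
Qed.

Lemma big_sorted_tuples (V : nmodType) m k (F : seq nat -> V) :
  \sum_(a : m.-tuple 'I_k.+1 | sorted leq (map (@nat_of_ord _) a)) F (map (@nat_of_ord _) a)
  = \sum_(s <- sorted_seqs m k) F s.
Proof.
rewrite -(big_map (fun a : m.-tuple _ => map (@nat_of_ord _) a) (sorted leq) F).
rewrite -big_filter; apply/perm_big/uniq_perm; first 2 last.
- move=> s; rewrite mem_filter mem_sorted_seqs andbCA; congr (_ && _).
  apply/mapP/andP => [[a _ ->]|[/eqP sm sk]].
    rewrite size_map size_tuple; split=> //.
    by apply/allP => _ /mapP [i _ ->]; rewrite -ltnS.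
  have sm' : size (map (@inord k) s) == m by rewrite size_map sm.
  exists (Tuple sm'); first exact: mem_index_enum.
  rewrite /= -map_comp -[LHS]map_id; apply/eq_in_map => y /(allP sk) yk /=.
  by rewrite inordK.
- rewrite filter_uniq // map_inj_uniq ?index_enum_uniq // => a b /inj_map ab.
  by apply: val_inj; apply: ab; apply: ord_inj.
- exact: uniq_sorted_seqs.
Qed.

Lemma sum_even_terms (V : nmodType) (F : nat -> V) n :
  (forall j, (j <= n)%N -> odd j -> F j = 0) ->
  \sum_(0 <= j < n.+1) F j = \sum_(0 <= m < n./2.+1) F (2 * m)%N.
Proof.
elim: n => [|n IHn] Fodd; first by rewrite !big_nat1.
rewrite big_nat_recr //= IHn => [|j jn]; last by apply: Fodd; apply: leqW.
have := odd_double_half n; rewrite uphalf_half.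
case: (boolP (odd n)) => [odd_n|even_n] /= n_half.
  by rewrite add1n [RHS]big_nat_recr //=; congr (_ + F _); rewrite -mul2n in n_half; lia.
by rewrite Fodd ?addr0 //= even_n.
Qed.

Lemma prodr_if_all (R : pzSemiRingType) (I : Type) (P : pred I) (F : I -> R) (s : seq I) :
  \prod_(i <- s) (if P i then F i else 0) = if all P s then \prod_(i <- s) F i else 0.
Proof.
elim: s => [|i s IHs]; first by rewrite !big_nil.
by rewrite !big_cons IHs /=; case: (P i); case: (all P s); rewrite ?mul0r ?mulr0.
Qed.

Section ThreeTermRecurrence.
Variables (R : comNzRingType) (w : nat -> R).

(* The coefficient of Q k in x ^+ n, for x * Q k.+1 = Q k.+2 + w k *: Q k. *)
Fixpoint powcoef (n k : nat) : R :=
  if n is n'.+1 then (if k is k'.+1 then powcoef n' k' else 0) + w k * powcoef n' k.+1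
  else (k == 0)%N%:R.

Lemma powcoefS n k :
  powcoef n.+1 k = (if k is k'.+1 then powcoef n k' else 0) + w k * powcoef n k.+1.
Proof. by []. Qed.

Lemma powcoef_gt n k : (n < k)%N -> powcoef n k = 0.
Proof.
elim: n k => [|n IHn] [|k] // ltnk /=.
by rewrite !IHn ?mulr0 ?addr0 //; lia.
Qed.

Lemma powcoef_odd n k : odd (n + k) -> powcoef n k = 0.
Proof.
elim: n k => [|n IHn] [|k] // odd_nk /=; rewrite !IHn ?mulr0 ?addr0 //.
all: by move: odd_nk; rewrite ?addn0 ?addn1 ?addSn ?addnS /= ?negbK.
Qed.

Definition hcomplete (m k : nat) : R := \sum_(s <- sorted_seqs m k) \prod_(y <- s) w y.

Lemma hcomplete0 k : hcomplete 0 k = 1.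
Proof. by rewrite /hcomplete big_seq1 big_nil. Qed.

Lemma hcompleteS m k : hcomplete m.+1 k = \sum_(0 <= j < k.+1) hcomplete m j * w j.
Proof.
rewrite /hcomplete sorted_seqsS big_allpairs_dep; apply: eq_bigr => j _.
by rewrite mulr_suml; apply: eq_bigr => s _; rewrite -cats1 big_cat big_seq1.
Qed.

Lemma hcomplete_recr m k :
  hcomplete m.+1 k.+1 = hcomplete m.+1 k + hcomplete m k.+1 * w k.+1.
Proof. by rewrite !hcompleteS big_nat_recr. Qed.

Hypothesis w_consecutive : forall k, w k * w k.+1 = 0.

Lemma hcomplete_mulr_shift m k : hcomplete m k.+1 * w k = hcomplete m k * w k.
Proof.
case: m => [|m]; first by rewrite !hcomplete0.
by rewrite hcomplete_recr mulrDl -mulrA [w _ * w _]mulrC w_consecutive mulr0 addr0.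
Qed.

Lemma powcoef_hcomplete m k : powcoef (m.*2 + k) k = hcomplete m k.
Proof.
elim: m k => [|m IHm] k.
  rewrite hcomplete0; elim: k => [|k IHk] //=.
  by rewrite IHk powcoef_gt ?mulr0 ?addr0.
elim: k => [|k IHk].
  rewrite addn0 doubleS powcoefS -(addn1 m.*2) IHm mulrC hcomplete_mulr_shift add0r.
  by rewrite hcompleteS big_nat1.
have -> : (m.+1.*2 + k.+1 = (m.*2 + k.+2).+1)%N by rewrite doubleS; lia.
rewrite powcoefS IHm mulrC hcomplete_mulr_shift hcomplete_recr -IHk.
by have -> : (m.+1.*2 + k = m.*2 + k.+2)%N by rewrite doubleS; lia.
Qed.

Variables (V : algType R) (x : V) (Q : nat -> V).
Hypotheses (Q0 : Q 0%N = 1) (xQ0 : x * Q 0%N = Q 1%N).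
Hypothesis xQS : forall k, x * Q k.+1 = Q k.+2 + w k *: Q k.

Lemma expr_powcoef n : x ^+ n = \sum_(0 <= k < n.+1) powcoef n k *: Q k.
Proof.
elim: n => [|n IHn]; first by rewrite big_nat1 /= scale1r Q0 expr0.
have lower : \sum_(0 <= k < n.+2) (if k is k'.+1 then powcoef n k' else 0) *: Q k
    = \sum_(0 <= k < n.+1) powcoef n k *: Q k.+1.
  by rewrite big_nat_recl //= scale0r add0r.
have upper : \sum_(0 <= k < n.+2) (w k * powcoef n k.+1) *: Q k
    = \sum_(0 <= k < n) (w k * powcoef n k.+1) *: Q k.
  by rewrite !big_nat_recr //= !powcoef_gt // !mulr0 !scale0r !addr0.
rewrite exprS IHn mulr_sumr big_nat_recl // -scalerAr xQ0.
under eq_bigr => k _ do rewrite -scalerAr xQS scalerDr scalerA mulrC.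
rewrite big_split /= addrA -(big_nat_recl _ _ (fun k => powcoef n k *: Q k.+1)) //.
by rewrite -lower -upper -big_split; apply: eq_bigr => k _; rewrite scalerDl.
Qed.

Lemma expr_hcomplete n :
  x ^+ n = \sum_(0 <= m < n./2.+1) hcomplete m (n - 2 * m) *: Q (n - 2 * m).
Proof.
rewrite expr_powcoef big_nat_rev /=.
under eq_bigr do rewrite add0n subSS.
rewrite (sum_even_terms (F := fun j => powcoef n (n - j) *: Q (n - j))) => [|j jn odd_j].
- apply: eq_big_nat => m /andP [_ mn].
  have m2n : (2 * m <= n)%N by rewrite mul2n -geq_half_double -ltnS.
  by have := powcoef_hcomplete m (n - 2 * m); rewrite -mul2n subnKC // => ->.
- by rewrite powcoef_odd ?scale0r // oddD oddB // addKb.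
Qed.

End ThreeTermRecurrence.

Lemma qq_neq0 : qq != 0.
Proof. by rewrite tofrac_eq0 polyX_eq0. Qed.

Lemma qq_expf_neq1 n : (0 < n)%N -> qq ^+ n != 1.
Proof.
move=> n_gt0; rewrite /qq -rmorphXn -(rmorph1 (@tofrac _)) tofrac_eq.
apply: contraTneq n_gt0 => Xn1.
by have := size_polyXn rat n; rewrite Xn1 size_poly1 => -[<-].
Qed.

Lemma qint0 : qint 0 = 0.
Proof. by rewrite /qint expr0 invr1 subrr mul0r. Qed.

Lemma qint_neq0 n : (0 < n)%N -> qint n != 0.
Proof.
have qq_subV_neq0 j : (0 < j)%N -> qq ^+ j - qq ^- j != 0.
  move=> j_gt0; have jj_gt0 : (0 < j + j)%N by rewrite addn_gt0 j_gt0.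
  rewrite subr_eq0; apply: contraNneq _ (qq_expf_neq1 jj_gt0) => qjV.
  by rewrite exprD {1}qjV mulVf // expf_neq0 // qq_neq0.
move=> n_gt0; rewrite /qint mulf_neq0 ?invr_eq0 ?qq_subV_neq0 //.
by have := qq_subV_neq0 1%N isT; rewrite expr1.
Qed.

Lemma qfact_neq0 n : qfact n != 0.
Proof.
rewrite /qfact prodf_seq_neq0; apply/allP => i.
by rewrite mem_index_iota => /andP [/qint_neq0].
Qed.

Lemma iprodS t n :
  iprod t n.+1 = iprod t n * (if (n %% 2 == t)%N then 'X^2 - (qint n ^+ 2)%:P else 1).
Proof. by rewrite /iprod big_mkcond big_nat_recr //= -big_mkcond. Qed.

Lemma dvdp_X_iprod0 n : 'X %| iprod 0 n.+1.
Proof.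
elim: n => [|n IHn]; last by rewrite iprodS dvdp_mulr.
by rewrite iprodS /iprod big_geq // mul1r /= qint0 expr0n subr0 dvdp_mulIl.
Qed.

Definition Pcan_undiv (t n : nat) : UI := qfact n *: Pcan t n.

Lemma Pcan_undivE t n : Pcan_undiv t n =
  if ~~ odd n then iprod t n else if t == 0%N then iprod t n %/ 'X else 'X * iprod t n.
Proof. by rewrite /Pcan_undiv /Pcan scalerA mulfV ?qfact_neq0 // scale1r. Qed.

Lemma Pcan_undiv0 t : Pcan_undiv t 0 = 1.
Proof. by rewrite Pcan_undivE /iprod big_geq. Qed.

Lemma mulX_Pcan_undiv0 t : (t <= 1)%N -> 'X * Pcan_undiv t 0 = Pcan_undiv t 1.
Proof.
rewrite Pcan_undiv0 mulr1 Pcan_undivE iprodS /iprod big_geq // mul1r /= qint0 expr0n subr0.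
by case: t => [|[|]] //= _; rewrite ?mulr1 // expr2 mulpK ?polyX_eq0.
Qed.

Definition iweight (t k : nat) : Qq := if (k %% 2 != t)%N then qint k.+1 ^+ 2 else 0.

Lemma iweight_consecutive t (t_le1 : (t <= 1)%N) k : iweight t k * iweight t k.+1 = 0.
Proof.
move: t_le1; rewrite /iweight !modn2 /=.
by case: t => [|[|]] //= _; case: (odd k); rewrite ?mul0r ?mulr0.
Qed.

Lemma mulX_Pcan_undivS t (t_le1 : (t <= 1)%N) n :
  'X * Pcan_undiv t n.+1 = Pcan_undiv t n.+2 + iweight t n *: Pcan_undiv t n.
Proof.
move: t_le1; rewrite !Pcan_undivE [iprod t n.+2]iprodS /iweight !modn2 /=.
case: t => [|[|]] // _; case: (boolP (odd n)) => [odd_n|even_n] /=.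
- have /dvdpP [D ED] := dvdp_X_iprod0 n.
  have -> : iprod 0 n = iprod 0 n.+1 by rewrite iprodS modn2 odd_n /= mulr1.
  by rewrite ED mulrAC !mulpK ?polyX_eq0 // -mul_polyC; ring.
- have /dvdpP [D ED] := dvdp_X_iprod0 n.
  by rewrite scale0r addr0 mulr1 ED mulpK ?polyX_eq0 // mulrC.
- by rewrite scale0r addr0 mulr1.
have -> : iprod 1 n = iprod 1 n.+1 by rewrite iprodS modn2 (negPf even_n) /= mulr1.
by rewrite -mul_polyC; ring.
Qed.

Lemma partsum_hcomplete t m k : partsum t m k = hcomplete (iweight t) m k.
Proof.
rewrite /partsum /hcomplete -big_sorted_tuples big_mkcondr; apply: eq_bigr => a _.
by rewrite big_map prodr_if_all.
Qed.

Theorem corollary2p13 (t : nat) (ht : (t <= 1)%N) (n : nat) :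
  ('X ^+ n : UI) =
  \sum_(0 <= m < (n./2).+1)
     (qfact (n - 2 * m) * partsum t m (n - 2 * m)) *: Pcan t (n - 2 * m).
Proof.
rewrite (expr_hcomplete (iweight_consecutive ht) (Pcan_undiv0 t) (mulX_Pcan_undiv0 ht)
  (mulX_Pcan_undivS ht)).
by apply: eq_bigr => m _; rewrite partsum_hcomplete mulrC -scalerA.
Qed.
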